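(* Let $M\ge 3$ be an integer (the number of telescopes), let $0<\epsilon<1$, and let the coherence parameters $g_{XY}=a_{XY}+ib_{XY}\in\mathbb{C}$ ($X<Y$) be such that the state $\rho$ below is a density operator. Fix a pair of telescopes $X\neq Y$ and a phase $\delta\in\mathbb{R}$ with $|\mathrm{Re}(g_{XY}e^{-i\delta})|<1$. For any number of rounds $D\ge 1$ and any strengths $\tau_1,\dots,\tau_D\in[0,1]$ with $\gamma_D>0$, the Fisher information matrices (for the two real parameters $(a_{XY},b_{XY})$) of the quantum-randomness scheme and of the classical-randomness scheme satisfy $$F^{qr}_{XY}=\binom{M}{2}\gamma_D\,F^{cr}_{XY},\qquad\text{hence}\qquad \frac{\Vert F^{qr}_{XY}\Vert}{\Vert F^{cr}_{XY}\Vert}=\binom{M}{2}\gamma_D .$$ Moreover, with the strengths $\tau_1,\dots,\tau_D$ chosen optimally, $\gamma_D\to\frac{1}{M-1}$ as $D\to\infty$, so that the ratio tends to $\frac{1}{M-1}\binom{M}{2}=\frac{M}{2}$.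
   Context: Each telescope $j\in\{1,\dots,M\}$ holds one optical mode, truncated to a qubit with basis $|0\rangle_j$ (vacuum) and $|1\rangle_j$ (one photon). The received stellar state (to first order in the mean photon number $\epsilon$) is $\rho=(1-\epsilon)|0\cdots0\rangle\langle0\cdots0|+\epsilon\rho^{(1)}$, where $\rho^{(1)}$ is supported on the single-photon states $|e_j\rangle$ (photon at telescope $j$, vacuum elsewhere) with $\langle e_j|\rho^{(1)}|e_j\rangle=1/M$, $\langle e_j|\rho^{(1)}|e_k\rangle=g_{jk}/M$ for $j<k$, and $\langle e_k|\rho^{(1)}|e_j\rangle=g_{jk}^*/M$. For the pair $X,Y$, write $|10\rangle_{XY}$ for one photon at $X$ and none at $Y$, etc., and let $|\delta_\pm\rangle_{XY}=\frac{1}{\sqrt2}(|01\rangle\pm e^{i\delta}|10\rangle)_{XY}$; $\overline{XY}$ denotes the remaining $M-2$ telescopes. The Fisher information matrix of a family of outcome probabilities $p(x|\mathbf c)$ with respect to real parameters $\mathbf c=(c_1,c_2)$ is $F_{ij}=\sum_x \frac{1}{p(x|\mathbf c)}\partial_{c_i}p(x|\mathbf c)\,\partial_{c_j}p(x|\mathbf c)$, with $p(x|\mathbf c)=\mathrm{tr}(E_x\rho)$ and the sum taken over the outcomes listed below (the outcomes relevant to $g_{XY}$). Classical-randomness scheme: a uniformly random pair of telescopes receives an entangled dual-rail photon and performs the Gottesman–Jennewein–Croke interferometric measurement; its relevant POVM elements for the pair $XY$ are $E^{\pm}_{XY}=\frac{1}{2\binom{M}{2}}|\delta_\pm\rangle\langle\delta_\pm|_{XY}\otimes\mathbb{I}_{\overline{XY}}$,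 and $F^{cr}_{XY}$ is the Fisher information matrix for $(a_{XY},b_{XY})$ from these two outcomes. Quantum-randomness scheme: before distributing the entangled photon, in each round $r=1,\dots,D$ every telescope applies the local weak measurement with Kraus operators (in the basis $|0\rangle,|1\rangle$) $M_0=\mathrm{diag}(\sqrt{1-\tau_r},1)$, $M_1=\mathrm{diag}(\sqrt{\tau_r},0)$; the pair $XY$ is selected at the first round in which $X$ and $Y$ are exactly the telescopes that have never obtained outcome $M_1$, and then the same interferometric measurement is performed on $XY$. Its relevant POVM elements are $E^{\pm}_{XY}=\frac{\gamma_D}{2}|\delta_\pm\rangle\langle\delta_\pm|_{XY}\otimes|0\cdots0\rangle\langle0\cdots0|_{\overline{XY}}$, where, with $x_0=1$ and $x_r=\prod_{j=1}^r(1-\tau_j)$, $\gamma_D=\sum_{r=1}^D x_r\left[(1-x_r)^{M-2}-(1-x_{r-1})^{M-2}\right]$; $F^{qr}_{XY}$ is the Fisher information matrix for $(a_{XY},b_{XY})$ from these two outcomes. Both Fisher informations are per distributed entangled (terrestrial) photon. *)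

From HB Require Import structures.
From mathcomp Require Import all_boot all_order all_algebra.
From mathcomp Require Import all_classical all_reals all_analysis.
From mathcomp Require Import complex.

Set Implicit Arguments.
Unset Strict Implicit.
Unset Printing Implicit Defensive.

Import Order.TTheory GRing.Theory Num.Theory.
Import numFieldNormedType.Exports.
Local Open Scope ring_scope.
Local Open Scope complex_scope.

Section Stellar.
Variable R : realType.
Variable M : nat.

(* Computational basis of M qubit modes: s j = true iff one photon at telescope j. *)
Definition basis := {ffun 'I_M -> bool}.

(* Operators on (C^2)^{ox M}, written as matrices in the computational basis. *)
Definition op := basis -> basis -> R[i].

Definition vac : basis := [ffun => false].
Definition e_ (j : 'I_M) : basis := [ffun k => k == j].


Definition trace_prod (A B : op) : R[i] := \sum_(s : basis) \sum_(t : basis) A s t * B t s.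

Definition density_op (rho : op) : Prop :=
  (forall s t, rho t s = conjc (rho s t)) /\
  (\sum_(s : basis) rho s s = 1) /\
  (forall v : basis -> R[i],
     0 <= \sum_(s : basis) \sum_(t : basis) conjc (v s) * rho s t * v t).

Definition rho1 (g : 'I_M -> 'I_M -> R[i]) : op := fun s t =>
  \sum_(j : 'I_M) \sum_(k : 'I_M)
    (if (s == e_ j) && (t == e_ k) then
       (if j == k then (M%:R)^-1
        else if (j < k)%N then g j k / M%:R
        else conjc (g k j) / M%:R)
     else 0).

Definition rho (eps : R) (g : 'I_M -> 'I_M -> R[i]) : op := fun s t =>
  ((1 - eps) * ((s == vac) && (t == vac))%:R)%:C + eps%:C * rho1 g s t.

Definition g_set (g : 'I_M -> 'I_M -> R[i]) (X Y : 'I_M) (a b : R) :=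
  fun j k => if (j == X) && (k == Y) then Complex a b else g j k.

Definition expi (d : R) : R[i] := Complex (cos d) (sin d).

(* amplitude <s_X s_Y | delta_pm>, sgn = true for +, false for - ;
   |01>_XY means no photon at X, one photon at Y. *)
Definition dket (X Y : 'I_M) (d : R) (sgn : bool) (s : basis) : R[i] :=
  ((Num.sqrt 2)^-1)%:C *
  (if ~~ s X && s Y then 1
   else if s X && ~~ s Y then (if sgn then 1 else -1) * expi d
   else 0).

(* |delta_pm><delta_pm|_XY (x) Id on the other telescopes *)
Definition proj_id (X Y : 'I_M) (d : R) (sgn : bool) : op := fun s t =>
  dket X Y d sgn s * conjc (dket X Y d sgn t) *
  ([forall k, ((k != X) && (k != Y)) ==> (s k == t k)])%:R.

(* |delta_pm><delta_pm|_XY (x) |0..0><0..0| on the other telescopes *)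
Definition proj_vac (X Y : 'I_M) (d : R) (sgn : bool) : op := fun s t =>
  dket X Y d sgn s * conjc (dket X Y d sgn t) *
  ([forall k, ((k != X) && (k != Y)) ==> (~~ s k && ~~ t k)])%:R.

Definition E_cr (X Y : 'I_M) (d : R) (sgn : bool) : op := fun s t =>
  ((2 * ('C(M, 2))%:R)^-1)%:C * proj_id X Y d sgn s t.

Definition xr (tau : nat -> R) (r : nat) : R := \prod_(1 <= j < r.+1) (1 - tau j).

Definition gammaD (D : nat) (tau : nat -> R) : R :=
  \sum_(1 <= r < D.+1)
    xr tau r * ((1 - xr tau r) ^+ (M - 2) - (1 - xr tau r.-1) ^+ (M - 2)).

Definition E_qr (D : nat) (tau : nat -> R) (X Y : 'I_M) (d : R) (sgn : bool) : op :=
  fun s t => (gammaD D tau / 2)%:C * proj_vac X Y d sgn s t.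

(* outcome probability p(x | a, b) = tr(E_x rho(a,b)) (real; we take its real part) *)
Definition prob (E : bool -> op) (eps : R) (g : 'I_M -> 'I_M -> R[i]) (X Y : 'I_M)
    (sgn : bool) (a b : R) : R :=
  complex.Re (trace_prod (E sgn) (rho eps (g_set g X Y a b))).

Definition dprob (E : bool -> op) eps g X Y (sgn : bool) (i : 'I_2) (a b : R) : R :=
  if i == 0 :> nat then derive1 (fun a' => prob E eps g X Y sgn a' b) a
  else derive1 (fun b' => prob E eps g X Y sgn a b') b.

Definition fisher (E : bool -> op) eps g X Y : 'M[R]_2 :=
  let a := complex.Re (g X Y) in let b := complex.Im (g X Y) in
  \matrix_(i < 2, j < 2)
    \sum_(sgn : bool) (prob E eps g X Y sgn a b)^-1 *
       dprob E eps g X Y sgn i a b * dprob E eps g X Y sgn j a b.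

Definition F_cr eps g X Y d := fisher (E_cr X Y d) eps g X Y.
Definition F_qr D tau eps g X Y d := fisher (E_qr D tau X Y d) eps g X Y.

Definition gamma_opt (D : nat) : R :=
  sup [set gammaD D tau | tau in
        [set tau : nat -> R | forall j, (1 <= j <= D)%N -> 0 <= tau j <= 1]].

End Stellar.

From Pilot Require Import Defs.
From mathcomp Require Import all_boot all_order all_algebra.
From mathcomp Require Import all_classical all_reals all_analysis.
From mathcomp Require Import complex.
From mathcomp Require Import ring lra.

Set Implicit Arguments.
Unset Strict Implicit.
Unset Printing Implicit Defensive.

Import Order.TTheory GRing.Theory Num.Theory.
Import numFieldNormedType.Exports.
Local Open Scope ring_scope.
Local Open Scope complex_scope.
Local Open Scope classical_set_scope.

(* Both schemes measure the projectors |delta_+-><delta_+-|_XY, which live in the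
   single-photon sector of the pair XY; rho has no component with two or more photons,
   so only the states e_X and e_Y contribute, and on them every other telescope is in
   vacuum.  Both schemes therefore give outcome probabilities
   K (1 +- (a cos delta + b sin delta)) that differ only in the prefactor K, namely
   1/(2 C(M,2)) versus gamma_D/2, and the Fisher matrix is linear in K.

   gamma_D is a lower Riemann-Stieltjes sum of int_0^1 x d(-(1-x)^(M-2)) = 1/(M-1)
   on the decreasing nodes x_r, so gamma_D <= 1/(M-1); the nodes x_r = 1 - r/D, reached
   by tau_j = 1/(D-j+1), lose at most 1/D, whence the optimal gamma_D tends to 1/(M-1). *)

Section StieltjesSum.
Variables (R : realType) (n : nat).

Lemma subrXX_bounds {u v : R} : 0 <= u -> u <= v ->
  n.+1%:R * u ^+ n * (v - u) <= v ^+ n.+1 - u ^+ n.+1 <= n.+1%:R * v ^+ n * (v - u).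
Proof.
move=> u_ge0 le_uv; have v_ge0 : 0 <= v := le_trans u_ge0 le_uv.
have term_bounds (i : nat) : (i <= n)%N -> u ^+ n <= v ^+ (n - i) * u ^+ i <= v ^+ n.
  move=> le_in; have lerX (k : nat) : u ^+ k <= v ^+ k by rewrite lerXn2r ?nnegrE.
  rewrite -[in u ^+ n](subnK le_in) -[in v ^+ n](subnK le_in) !exprD.
  by rewrite ler_wpM2r ?exprn_ge0 ?ler_wpM2l ?lerX ?exprn_ge0.
have sum_const (w : R) : n.+1%:R * w ^+ n = \sum_(i < n.+1) w ^+ n.
  by rewrite sumr_const card_ord mulr_natl.
rewrite subrXX [(v - u) * _]mulrC !sum_const.
by apply/andP; split; rewrite ler_wpM2r ?subr_ge0 //; apply: ler_sum => i _;
  case/andP: (term_bounds i (ltn_ord i)).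
Qed.

(* An antiderivative of [x |-> n x (1 - x)^(n-1)], the integrand of the
   Stieltjes integral [int_0^1 x d(-(1 - x)^n) = 1/(n+1)] that [gammaD] discretises. *)
Definition stieltjes_primitive (x : R) : R := - x * (1 - x) ^+ n - (1 - x) ^+ n.+1 / n.+1%:R.

Lemma stieltjes_primitive01 :
  (0 < n)%N -> stieltjes_primitive 1 - stieltjes_primitive 0 = n.+1%:R^-1.
Proof.
move=> n_gt0; rewrite /stieltjes_primitive subrr subr0 !expr0n !expr1n /= gtn_eqF //.
by rewrite !(mulr0, mul0r, oppr0, subr0, sub0r, opprK, mul1r).
Qed.

Lemma stieltjes_primitive_increment {x y : R} : 0 <= y -> y <= x -> x <= 1 ->
  0 <= stieltjes_primitive x - stieltjes_primitive y - y * ((1 - y) ^+ n - (1 - x) ^+ n)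
    <= (x - y) * ((1 - y) ^+ n - (1 - x) ^+ n).
Proof.
move=> y_ge0 le_yx x_le1.
have N_gt0 : 0 < n.+1%:R :> R by rewrite ltr0n.
have := @subrXX_bounds (1 - x) (1 - y) ltac:(lra) ltac:(lra).
rewrite (_ : 1 - y - (1 - x) = x - y); last by ring.
set W := _ - _ ^+ n.+1 => /andP[W_ge W_le].
have -> : stieltjes_primitive x - stieltjes_primitive y - y * ((1 - y) ^+ n - (1 - x) ^+ n)
    = W / n.+1%:R - (1 - x) ^+ n * (x - y).
  by rewrite /stieltjes_primitive /W !exprS; field; rewrite gt_eqF.
have : (1 - x) ^+ n * (x - y) <= W / n.+1%:R <= (1 - y) ^+ n * (x - y).
  by rewrite ler_pdivlMr // ler_pdivrMr // ![_ * n.+1%:R]mulrC !mulrA W_ge W_le.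
by case/andP=> lo hi; rewrite subr_ge0 lo [(x - y) * _]mulrC [X in _ <= X]mulrBl lerD2r hi.
Qed.

Definition stieltjes_sum (x : nat -> R) (D : nat) : R :=
  \sum_(1 <= r < D.+1) x r * ((1 - x r) ^+ n - (1 - x r.-1) ^+ n).

Definition stieltjes_gap (x : nat -> R) (D : nat) : R :=
  \sum_(1 <= r < D.+1) (x r.-1 - x r) * ((1 - x r) ^+ n - (1 - x r.-1) ^+ n).

Definition descending01 (D : nat) (x : nat -> R) : Prop :=
  forall r, (r < D)%N -> [/\ 0 <= x r.+1, x r.+1 <= x r & x r <= 1].

Lemma stieltjes_sum_bounds {x : nat -> R} {D : nat} : descending01 D x ->
  0 <= stieltjes_primitive (x 0%N) - stieltjes_primitive (x D) - stieltjes_sum x D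
    <= stieltjes_gap x D.
Proof.
elim: D => [|D IH] x_desc.
  by rewrite /stieltjes_sum /stieltjes_gap !big_geq // !subrr lexx.
have /andP[lo hi] := IH (fun r lt_rD => x_desc r (ltnW lt_rD)).
have [x_ge0 le_x x_le1] := x_desc D (ltnSn D).
have /andP[lo' hi'] := stieltjes_primitive_increment x_ge0 le_x x_le1.
move: lo hi; rewrite /stieltjes_sum /stieltjes_gap !(big_nat_recr D.+1) //=.
lra.
Qed.

Lemma stieltjes_sum_le (x : nat -> R) (D : nat) : (0 < n)%N ->
  descending01 D x -> x 0%N = 1 -> stieltjes_sum x D <= n.+1%:R^-1.
Proof.
move=> n_gt0 x_desc x0.
have xD_in01 : 0 <= x D <= 1.
  case: D x_desc => [|D] x_desc; first by rewrite x0 ler01 lexx.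
  have [xD_ge0 le_xD xD_le1] := x_desc D (ltnSn D).
  by rewrite xD_ge0 (le_trans le_xD xD_le1).
have /andP[xD_ge0 xD_le1] := xD_in01.
have /andP[+ _] := stieltjes_primitive_increment (lexx 0) xD_ge0 xD_le1.
have /andP[+ _] := stieltjes_sum_bounds x_desc.
rewrite -(stieltjes_primitive01 n_gt0) x0; lra.
Qed.

Lemma telescope_sumr1 (h : nat -> R) (D : nat) :
  \sum_(1 <= r < D.+1) (h r - h r.-1) = h D - h 0%N.
Proof. by rewrite big_add1 /= telescope_sumr. Qed.

Lemma stieltjes_sum_uniform_ge (x : nat -> R) (D : nat) : (0 < n)%N -> (0 < D)%N ->
  (forall r, (r <= D)%N -> x r = 1 - r%:R / D%:R) ->
  n.+1%:R^-1 - D%:R^-1 <= stieltjes_sum x D.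
Proof.
move=> n_gt0 D_gt0 x_unif.
have D_gtr0 : 0 < D%:R :> R by rewrite ltr0n.
have x_desc : descending01 D x.
  move=> r lt_rD; rewrite !x_unif ?(ltnW lt_rD) //.
  have step : r.+1%:R / D%:R = r%:R / D%:R + D%:R^-1 :> R.
    by rewrite -natr1 mulrDl mul1r.
  have : r.+1%:R / D%:R <= 1 :> R by rewrite ler_pdivrMr // mul1r ler_nat.
  have : 0 <= r%:R / D%:R :> R by rewrite divr_ge0 // ltW.
  have : 0 < D%:R^-1 :> R by rewrite invr_gt0.
  by split; lra.
have gap : stieltjes_gap x D = D%:R^-1.
  have -> : stieltjes_gap x D =
      D%:R^-1 * \sum_(1 <= r < D.+1) ((1 - x r) ^+ n - (1 - x r.-1) ^+ n).
    rewrite /stieltjes_gap mulr_sumr; apply: eq_big_nat => -[|r] /andP[// _ r_le].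
    rewrite ltnS in r_le; rewrite /= !x_unif ?(ltnW r_le) //.
    by congr (_ * _); rewrite -natr1; field; rewrite gt_eqF.
  rewrite (telescope_sumr1 (fun r => (1 - x r) ^+ n) D) !x_unif // divff ?gt_eqF // mul0r.
  by rewrite !(subrr, subr0) expr0n expr1n gtn_eqF // subr0 mulr1.
have /andP[_] := stieltjes_sum_bounds x_desc.
rewrite gap -(stieltjes_primitive01 n_gt0) !x_unif // divff ?gt_eqF // mul0r !subrr subr0.
lra.
Qed.

End StieltjesSum.

Section Strengths.
Variable R : realType.

Definition admissible (D : nat) (tau : nat -> R) : Prop :=
  forall j, (1 <= j <= D)%N -> 0 <= tau j <= 1.

Lemma xr0 (tau : nat -> R) : xr tau 0 = 1.
Proof. by rewrite /xr big_geq. Qed.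

Lemma xrS (tau : nat -> R) (r : nat) : xr tau r.+1 = xr tau r * (1 - tau r.+1).
Proof. by rewrite /xr big_nat_recr. Qed.

Lemma xr_in01 (D : nat) (tau : nat -> R) (r : nat) : admissible D tau ->
  (r <= D)%N -> 0 <= xr tau r <= 1.
Proof.
move=> tau_adm; elim: r => [|r IH] le_rD; first by rewrite xr0 ler01 lexx.
have /andP[? ?] := tau_adm r.+1 le_rD; have /andP[? ?] := IH (ltnW le_rD).
by rewrite xrS mulr_ge0 ?subr_ge0 //= mulr_ile1 ?subr_ge0 // lerBlDr lerDl.
Qed.

Lemma admissible_descending01 (D : nat) (tau : nat -> R) :
  admissible D tau -> descending01 D (xr tau).
Proof.
move=> tau_adm r lt_rD.
have /andP[? ?] := tau_adm r.+1 lt_rD; have /andP[? ?] := xr_in01 tau_adm (ltnW lt_rD).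
have /andP[? _] := xr_in01 tau_adm lt_rD.
by split=> //; rewrite xrS ler_piMr // lerBlDr lerDl.
Qed.

Lemma natrS_sub2 (M : nat) : (2 <= M)%N -> (M - 2).+1%:R = M%:R - 1 :> R.
Proof. by case: M => [|[|m]] // _; rewrite !subSS subn0 [in RHS]mulrS addrC addrK. Qed.

Lemma gammaDE (M D : nat) (tau : nat -> R) :
  gammaD M D tau = stieltjes_sum (M - 2) (xr tau) D.
Proof. by []. Qed.

Lemma gammaD_le (M D : nat) (tau : nat -> R) : (3 <= M)%N -> admissible D tau ->
  gammaD M D tau <= (M%:R - 1)^-1.
Proof.
move=> M_ge3 tau_adm; rewrite gammaDE -natrS_sub2 ?(ltnW M_ge3) //.
apply: stieltjes_sum_le; [by rewrite subn_gt0 | exact: admissible_descending01 | exact: xr0].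
Qed.

Definition tau_unif (D j : nat) : R := (D%:R - j.-1%:R)^-1.

Lemma admissible_unif (D : nat) : admissible D (tau_unif D).
Proof.
move=> j /andP[j_ge1 le_jD].
rewrite /tau_unif -natrB; last exact: leq_trans (leq_pred j) le_jD.
have : 1 <= (D - j.-1)%:R :> R by rewrite ler1n subn_gt0 prednK.
by move=> ?; rewrite invr_ge0 invf_le1; lra.
Qed.

Lemma xr_unif (D r : nat) : (0 < D)%N -> (r <= D)%N ->
  xr (tau_unif D) r = 1 - r%:R / D%:R.
Proof.
move=> D_gt0; elim: r => [|r IH] le_rD; first by rewrite xr0 mul0r subr0.
have D_neq0 : D%:R != 0 :> R by rewrite pnatr_eq0 -lt0n.
have Dr_neq0 : D%:R - r%:R != 0 :> R by rewrite -natrB ?pnatr_eq0 -?lt0n ?subn_gt0 // ltnW.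
by rewrite xrS IH ?(ltnW le_rD) // /tau_unif -natr1; field; rewrite D_neq0 Dr_neq0.
Qed.

Lemma gammaD_unif_ge (M D : nat) : (3 <= M)%N -> (0 < D)%N ->
  (M%:R - 1)^-1 - D%:R^-1 <= gammaD M D (tau_unif D).
Proof.
move=> M_ge3 D_gt0; rewrite gammaDE -natrS_sub2 ?(ltnW M_ge3) //.
by apply: stieltjes_sum_uniform_ge; rewrite ?subn_gt0 // => r; apply: xr_unif.
Qed.

End Strengths.

Section OptimalGamma.
Variables (R : realType) (M : nat).
Hypothesis M_ge3 : (3 <= M)%N.

Lemma gamma_opt_bounds (D : nat) : (0 < D)%N ->
  (M%:R - 1)^-1 - D%:R^-1 <= gamma_opt R M D <= (M%:R - 1)^-1.
Proof.
move=> D_gt0; rewrite /gamma_opt.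
set S := [set gammaD M D tau | tau in _].
have S_unif : S (gammaD M D (tau_unif R D)).
  by exists (tau_unif R D); first exact: admissible_unif.
have S_ub : ubound S (M%:R - 1)^-1 by move=> _ [tau tau_adm <-]; exact: gammaD_le.
rewrite (le_trans (gammaD_unif_ge R M_ge3 D_gt0)) /=.
  by apply: ge_sup => //; exists (gammaD M D (tau_unif R D)).
apply: sup_upper_bound => //.
by split; [exists (gammaD M D (tau_unif R D)) | exists (M%:R - 1)^-1].
Qed.

Lemma gamma_opt_cvg : gamma_opt R M D @[D --> \oo] --> ((M%:R - 1)^-1 : R).
Proof.
rewrite -cvg_shiftS.
apply: (@squeeze_cvgr _ _ _ _ (fun D => (M%:R - 1)^-1 - harmonic D) (fun=> (M%:R - 1)^-1)).
- by apply: nearW => D; exact: gamma_opt_bounds.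
- by rewrite -[X in _ --> X]subr0; apply: cvgB; [exact: cvg_cst | exact: cvg_harmonic].
- exact: cvg_cst.
Qed.

Lemma bin2_div_pred : ('C(M, 2))%:R * (M%:R - 1)^-1 = M%:R / 2 :> R.
Proof.
have M_gt1 : 1 < M%:R :> R by rewrite ltr1n (leq_trans _ M_ge3).
have : (2 * 'C(M, 2) = M * M.-1)%N by rewrite -mul_bin_diag bin1.
move/(congr1 (GRing.natmul (1 : R))); rewrite !natrM -subn1 natrB ?(leq_trans _ M_ge3) //.
move=> eq2C; have -> : ('C(M, 2))%:R = M%:R * (M%:R - 1) / 2 :> R.
  by rewrite -eq2C; field.
by field; lra.
Qed.

Lemma scaled_gamma_opt_cvg :
  ('C(M, 2))%:R * gamma_opt R M D @[D --> \oo] --> (M%:R / 2 : R).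
Proof. by rewrite -bin2_div_pred; apply: cvgMr; exact: gamma_opt_cvg. Qed.

End OptimalGamma.

Definition pm {R : pzRingType} (b : bool) : R := if b then 1 else -1.

Section ComplexParts.
Variable R : realType.

Lemma ReZ (c : R) (x : R[i]) : complex.Re (c%:C * x) = c * complex.Re x.
Proof. by case: x => u v /=; rewrite mul0r subr0. Qed.

Lemma natrVC (n : nat) : (n%:R : R[i])^-1 = (n%:R^-1 : R)%:C.
Proof. by rewrite -(rmorph_nat (real_complex R)) fmorphV. Qed.

Lemma Re_mul_conj_expi (z : R[i]) (d : R) :
  complex.Re (z * (expi d)^*) = complex.Re z * cos d + complex.Im z * sin d.
Proof. by case: z => u v; rewrite /= mulrN opprK. Qed.

End ComplexParts.

Section Traces.
Variables (R : realType) (M : nat).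
Implicit Types (s t : Defs.basis M) (j k : 'I_M) (g : 'I_M -> 'I_M -> R[i]).

Lemma e_inj : injective (@e_ M).
Proof.
by move=> j k /(congr1 (fun s : Defs.basis M => s j)); rewrite !ffunE eqxx => /esym/eqP.
Qed.

Lemma e_neq_vac j : e_ j != vac M.
Proof. by apply/eqP => /(congr1 (fun s : Defs.basis M => s j)); rewrite !ffunE eqxx. Qed.

Lemma rho1_e g j k : rho1 g (e_ j) (e_ k) =
  if j == k then M%:R^-1 else if (j < k)%N then g j k / M%:R else (g k j)^* / M%:R.
Proof.
rewrite /rho1; under eq_bigr do under eq_bigr do rewrite !(inj_eq e_inj).
rewrite (bigD1 j) //= [X in _ + X]big1 ?addr0 => [|j' ne_j'j]; last first.
  by apply: big1 => k' _; rewrite eq_sym (negbTE ne_j'j).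
rewrite (bigD1 k) //= [X in _ + X]big1 ?addr0 => [|k' ne_k'k]; first by rewrite !eqxx.
by rewrite eq_sym (negbTE ne_k'k) andbF.
Qed.

Lemma rho_e (eps : R) g j k : rho eps g (e_ j) (e_ k) = eps%:C * rho1 g (e_ j) (e_ k).
Proof. by rewrite /rho (negbTE (e_neq_vac j)) mulr0 add0r. Qed.

Lemma rho_support (eps : R) g s t : rho eps g s t != 0 ->
  (s == vac M) && (t == vac M) \/ exists j k, s = e_ j /\ t = e_ k.
Proof.
rewrite /rho; case: ((s == vac M) && (t == vac M)) => /=; first by left.
rewrite mulr0 add0r mulf_eq0 negb_or => /andP[_ rho1_neq0]; right.
apply: contrapT => no_e; move/eqP: rho1_neq0; apply.
apply: big1 => j _; apply: big1 => k _.
by case: ifP => // /andP[/eqP s_ej /eqP t_ek]; case: no_e; exists j, k.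
Qed.

Lemma trace_prod_pair (A B : op R M) (p q : Defs.basis M) : p != q ->
  (forall s t, A s t * B t s != 0 -> (s \in [:: p; q]) && (t \in [:: p; q])) ->
  trace_prod A B = A p p * B p p + A p q * B q p + (A q p * B p q + A q q * B q q).
Proof.
move=> neq_pq AB_pair.
have sum_pair (F : Defs.basis M -> R[i]) :
    (forall s, s \notin [:: p; q] -> F s = 0) -> \sum_s F s = F p + F q.
  move=> F_out; rewrite (bigD1 p) // (bigD1 q) 1?eq_sym //= big1 ?addr0 ?addrA // => s.
  by case/andP=> ne_sq ne_sp; apply: F_out; rewrite !inE negb_or ne_sp ne_sq.
have term0 s t : (s \notin [:: p; q]) || (t \notin [:: p; q]) -> A s t * B t s = 0.
  by rewrite -negb_and; apply: contraNeq; exact: AB_pair.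
rewrite /trace_prod sum_pair => [|s s_out]; last by apply: big1 => t _; rewrite term0 ?s_out.
by rewrite !sum_pair // => t t_out; rewrite term0 ?t_out ?orbT.
Qed.

Section Pair.
Variables (X Y : 'I_M) (d : R).

Lemma dket_support sgn s : dket X Y d sgn s != 0 -> s X != s Y.
Proof. by rewrite /dket; case: (s X); case: (s Y); rewrite ?mulr0 ?eqxx. Qed.

Lemma e_in_pair j : e_ j X != e_ j Y -> e_ j \in [:: e_ X; e_ Y].
Proof.
rewrite !ffunE !inE !(inj_eq e_inj).
by rewrite ![_ == j]eq_sym; case: (j == X); case: (j == Y).
Qed.

Lemma dket_rho_pair (eps : R) g sgn (c : R[i]) s t :
  dket X Y d sgn s * (dket X Y d sgn t)^* * c * rho eps g t s != 0 ->
  (s \in [:: e_ X; e_ Y]) && (t \in [:: e_ X; e_ Y]).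
Proof.
move=> nz.
have ds : dket X Y d sgn s != 0 by apply: contraNneq nz => ->; rewrite !mul0r.
have dt : dket X Y d sgn t != 0 by apply: contraNneq nz => ->; rewrite raddf0 mulr0 !mul0r.
have rho_neq0 : rho eps g t s != 0 by apply: contraNneq nz => ->; rewrite mulr0.
case: (rho_support rho_neq0) ds dt => [/andP[/eqP t_vac _] _ dt|[j [k [-> ->]]] ds dt].
  by move: (dket_support dt); rewrite t_vac !ffunE.
by rewrite (e_in_pair (dket_support ds)) (e_in_pair (dket_support dt)).
Qed.

Lemma pair_vacuum s k : s \in [:: e_ X; e_ Y] -> k != X -> k != Y -> s k = false.
Proof. by rewrite !inE => /orP[] /eqP-> ? ?; rewrite ffunE; apply/negbTE. Qed.

Lemma proj_id_pair sgn s t : s \in [:: e_ X; e_ Y] -> t \in [:: e_ X; e_ Y] ->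
  proj_id X Y d sgn s t = dket X Y d sgn s * (dket X Y d sgn t)^*.
Proof.
move=> s_pair t_pair; rewrite /proj_id.
suff -> : [forall k, (k != X) && (k != Y) ==> (s k == t k)] by rewrite mulr1.
by apply/forallP => k; apply/implyP => /andP[? ?]; rewrite !pair_vacuum.
Qed.

Lemma proj_vac_pair sgn s t : s \in [:: e_ X; e_ Y] -> t \in [:: e_ X; e_ Y] ->
  proj_vac X Y d sgn s t = dket X Y d sgn s * (dket X Y d sgn t)^*.
Proof.
move=> s_pair t_pair; rewrite /proj_vac.
suff -> : [forall k, (k != X) && (k != Y) ==> ~~ s k && ~~ t k] by rewrite mulr1.
by apply/forallP => k; apply/implyP => /andP[? ?]; rewrite !pair_vacuum.
Qed.

Lemma trace_proj_vac (eps : R) g sgn :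
  trace_prod (proj_vac X Y d sgn) (rho eps g) = trace_prod (proj_id X Y d sgn) (rho eps g).
Proof.
apply: eq_bigr => s _; apply: eq_bigr => t _.
have [|no_pair] := boolP ((s \in [:: e_ X; e_ Y]) && (t \in [:: e_ X; e_ Y])).
  by case/andP=> s_pair t_pair; rewrite proj_id_pair ?proj_vac_pair.
have term0 (c : R[i]) : dket X Y d sgn s * (dket X Y d sgn t)^* * c * rho eps g t s = 0.
  by apply/eqP; apply: contraNT no_pair; exact: dket_rho_pair.
by rewrite /proj_vac /proj_id !term0.
Qed.

Lemma Re_trace_proj_id (eps : R) g sgn : (X < Y)%N ->
  complex.Re (trace_prod (proj_id X Y d sgn) (rho eps g))
  = eps / M%:R * (1 + pm sgn * complex.Re (g X Y * (expi d)^*)).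
Proof.
move=> lt_XY; have neq_XY : X != Y by rewrite neq_ltn lt_XY.
rewrite (@trace_prod_pair _ _ (e_ X) (e_ Y)) ?(inj_eq e_inj) // => [|s t];
  last exact: dket_rho_pair.
rewrite !proj_id_pair ?inE ?eqxx ?orbT // !rho_e !rho1_e eqxx (negbTE neq_XY).
rewrite eq_sym (negbTE neq_XY) lt_XY ltnNge (ltnW lt_XY) /= /dket !ffunE eqxx (negbTE neq_XY).
rewrite eq_sym (negbTE neq_XY) /= natrVC /expi.
have -> : (if sgn then 1 else -1) = (pm sgn : R)%:C :> R[i].
  by case: sgn; rewrite /pm ?rmorphN rmorph1.
have pm2 : pm sgn ^+ 2 = 1 :> R by case: sgn; rewrite ?expr1n ?sqrrN ?expr1n.
have sqrt2V2 : ((Num.sqrt 2)^-1) ^+ 2 = 2^-1 :> R by rewrite exprVn sqr_sqrtr ?ler0n.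
case: (g X Y) => a b /=; rewrite !eqxx /=.
transitivity ((Num.sqrt 2)^-1 ^+ 2 * eps / M%:R *
  (1 + (cos d ^+ 2 + sin d ^+ 2) * pm sgn ^+ 2 + 2 * pm sgn * (a * cos d + b * sin d))).
  by ring.
have M_neq0 : M%:R != 0 :> R by rewrite pnatr_eq0 -lt0n (leq_ltn_trans _ (ltn_ord Y)).
by rewrite sqrt2V2 cos2Dsin2 pm2; field.
Qed.

End Pair.
End Traces.

Section Probabilities.
Variables (R : realType) (M : nat).
Implicit Types (g : 'I_M -> 'I_M -> R[i]) (X Y : 'I_M).

Lemma trace_prodZl (c : R[i]) (A B : op R M) :
  trace_prod (fun s t => c * A s t) B = c * trace_prod A B.
Proof.
rewrite /trace_prod mulr_sumr; apply: eq_bigr => s _.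
by rewrite mulr_sumr; apply: eq_bigr => t _; rewrite mulrA.
Qed.

Lemma prob_cr (eps : R) g X Y (d : R) sgn (a b : R) : (X < Y)%N ->
  prob (E_cr X Y d) eps g X Y sgn a b =
  (2 * ('C(M, 2))%:R)^-1 * (eps / M%:R) * (1 + pm sgn * (a * cos d + b * sin d)).
Proof.
move=> lt_XY; rewrite /prob /E_cr trace_prodZl ReZ Re_trace_proj_id // /g_set !eqxx /=.
by rewrite mulrA mulrN opprK.
Qed.

Lemma prob_qr (D : nat) (tau : nat -> R) (eps : R) g X Y (d : R) sgn (a b : R) :
  (X < Y)%N ->
  prob (E_qr D tau X Y d) eps g X Y sgn a b =
  gammaD M D tau / 2 * (eps / M%:R) * (1 + pm sgn * (a * cos d + b * sin d)).
Proof.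
move=> lt_XY; rewrite /prob /E_qr trace_prodZl trace_proj_vac ReZ Re_trace_proj_id //.
by rewrite /g_set !eqxx /= mulrA mulrN opprK.
Qed.

End Probabilities.

Section Fisher.
Variables (R : realType) (M : nat).

Lemma derive1_affine (p q z : R) : derive1 (fun x => p + q * x) z = q.
Proof. by rewrite derive1E derive_val add0r mul1r scaler1. Qed.

Definition grad_dir (d : R) (i : 'I_2) : R := if i == 0 :> nat then cos d else sin d.

Definition fisher_shape (d r : R) : 'M[R]_2 :=
  \matrix_(i, j) (grad_dir d i * grad_dir d j * \sum_(sgn : bool) (1 + pm sgn * r)^-1).

Lemma fisher_affine (E : bool -> op R M) (eps : R) g (X Y : 'I_M) (d K : R) :
  (forall sgn a b, prob E eps g X Y sgn a b = K * (1 + pm sgn * (a * cos d + b * sin d))) ->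
  fisher E eps g X Y
  = K *: fisher_shape d (complex.Re (g X Y) * cos d + complex.Im (g X Y) * sin d).
Proof.
move=> probE.
have dprobE sgn (i : 'I_2) a b : dprob E eps g X Y sgn i a b = K * pm sgn * grad_dir d i.
  rewrite /dprob /grad_dir; case: ifP => _.
    have -> : (fun a' => prob E eps g X Y sgn a' b)
        = (fun x => K + K * pm sgn * (b * sin d) + K * pm sgn * cos d * x).
      by apply: funext => x; rewrite probE; ring.
    exact: derive1_affine.
  have -> : (fun b' => prob E eps g X Y sgn a b')
      = (fun x => K + K * pm sgn * (a * cos d) + K * pm sgn * sin d * x).
    by apply: funext => x; rewrite probE; ring.
  exact: derive1_affine.
apply/matrixP => i j; rewrite !mxE.
under eq_bigr do rewrite probE !dprobE.
set r := complex.Re (g X Y) * cos d + complex.Im (g X Y) * sin d.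
rewrite !mulr_sumr; apply: eq_bigr => sgn _.
have [->|K_neq0] := eqVneq K 0; first by rewrite !(mul0r, mulr0, invr0).
have pm2 : pm sgn ^+ 2 = 1 :> R by case: sgn; rewrite /pm ?sqrrN expr1n.
rewrite invfM; set u := (1 + _)^-1.
transitivity (K * grad_dir d i * grad_dir d j * pm sgn ^+ 2 * u); first by field.
by rewrite pm2 mulr1 !mulrA.
Qed.

Lemma fisher_shape_neq0 (d r : R) : -1 < r < 1 -> fisher_shape d r != 0.
Proof.
case/andP=> r_gtN1 r_lt1; apply/eqP => /(congr1 (fun A : 'M[R]_2 => A 0 0 + A 1 1)).
rewrite !mxE /grad_dir /= big_bool /pm /= addr0 -mulrDl -!expr2 cos2Dsin2 mul1r.
by apply/eqP; rewrite gt_eqF // addr_gt0 // invr_gt0; lra.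
Qed.

End Fisher.

Theorem theorem1 (R : realType) (M : nat) (eps : R)
    (g : 'I_M -> 'I_M -> R[i]) (X Y : 'I_M) (delta : R) :
  (3 <= M)%N -> 0 < eps < 1 ->
  density_op (rho eps g) ->
  (X < Y)%N ->
  `| complex.Re (g X Y * conjc (expi delta)) | < 1 ->
  (forall (D : nat) (tau : nat -> R), (1 <= D)%N ->
     (forall j, (1 <= j <= D)%N -> 0 <= tau j <= 1) ->
     0 < gammaD M D tau ->
     F_qr D tau eps g X Y delta = (('C(M, 2))%:R * gammaD M D tau) *: F_cr eps g X Y delta
     /\ F_cr eps g X Y delta != 0
     /\ `| F_qr D tau eps g X Y delta | / `| F_cr eps g X Y delta |
          = ('C(M, 2))%:R * gammaD M D tau)
  /\ (gamma_opt R M D @[D --> \oo] --> ((M%:R - 1)^-1 : R))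
  /\ ((('C(M, 2))%:R * gamma_opt R M D) @[D --> \oo] --> (M%:R / 2 : R)).
Proof.
move=> M_ge3 /andP[eps_gt0 _] _ lt_XY Re_lt1.
split; last by split; [exact: gamma_opt_cvg | exact: scaled_gamma_opt_cvg].
move=> D tau _ _ gamma_gt0.
have M_gt0 : 0 < M%:R :> R by rewrite ltr0n (leq_trans _ M_ge3).
have C_gt0 : 0 < ('C(M, 2))%:R :> R by rewrite ltr0n bin_gt0 (leq_trans _ M_ge3).
set r := complex.Re (g X Y) * cos delta + complex.Im (g X Y) * sin delta.
set Kc := (2 * ('C(M, 2))%:R)^-1 * (eps / M%:R).
have Fc : F_cr eps g X Y delta = Kc *: fisher_shape delta r.
  by apply: fisher_affine => sgn a b; rewrite prob_cr.
have Fq : F_qr D tau eps g X Y delta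
    = (('C(M, 2))%:R * gammaD M D tau) *: F_cr eps g X Y delta.
  rewrite Fc scalerA; apply: fisher_affine => sgn a b; rewrite prob_qr // /Kc.
  by congr (_ * _); field; rewrite !gt_eqF.
have Fc_neq0 : F_cr eps g X Y delta != 0.
  have r_in : -1 < r < 1 by rewrite -ltr_norml /r -Re_mul_conj_expi.
  rewrite Fc scaler_eq0 negb_or fisher_shape_neq0 // andbT.
  by rewrite /Kc !mulf_neq0 ?invr_eq0 ?gt_eqF ?mulr_gt0.
split=> //; split=> //.
by rewrite Fq normrZ gtr0_norm ?mulr_gt0 // mulfK ?normr_eq0.
Qed.
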